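(* Let $G$ be a simple graph and let $G'$ be a minor of $G$, and let $k$ be an integer with $1\le k<|V(G')|$. Then $F_k(G')$ is a minor of $F_k(G)$.
   Context: For a simple graph $G=(V,E)$ on $n$ vertices and an integer $1\le k<n$, the $k$-token graph $F_k(G)$ is the graph whose vertices are all $k$-element subsets of $V$, two such subsets $A,B$ being adjacent whenever their symmetric difference $A\triangle B$ is a pair $\{a,b\}$ with $a$ adjacent to $b$ in $G$. A graph $H$ is a minor of $G$ if a graph isomorphic to $H$ can be obtained from $G$ by contracting edges, deleting edges, and deleting vertices (contractions producing simple graphs). *)

From Stdlib Require Import Relation_Operators.
From mathcomp Require Import all_boot.
Set Implicit Arguments. Unset Strict Implicit. Unset Printing Implicit Defensive.

Record sgraph (T : finType) := SGraph { gV : {set T}; gE : rel T }.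

Definition simple_graph (T : finType) (G : sgraph T) : Prop :=
  [/\ symmetric (gE G), irreflexive (gE G) &
      forall x y, gE G x y -> (x \in gV G) && (y \in gV G)].

Definition delete_vertex (T : finType) (G : sgraph T) (v : T) : sgraph T :=
  SGraph (gV G :\ v) (fun x y => [&& gE G x y, x != v & y != v]).

Definition delete_edge (T : finType) (G : sgraph T) (u v : T) : sgraph T :=
  SGraph (gV G)
    (fun x y => gE G x y && ~~ (((x == u) && (y == v)) || ((x == v) && (y == u)))).

(* contract the edge uv: v is merged into u; the result is simple *)
Definition contract_edge (T : finType) (G : sgraph T) (u v : T) : sgraph T :=
  SGraph (gV G :\ v)
    (fun x y => [&& x != y, x \in gV G :\ v, y \in gV G :\ v &
       [|| gE G x y, (x == u) && gE G v y | (y == u) && gE G x v]]).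

Inductive minor_step (T : finType) (G : sgraph T) : sgraph T -> Prop :=
  | MS_delv v : v \in gV G -> minor_step G (delete_vertex G v)
  | MS_dele u v : gE G u v -> minor_step G (delete_edge G u v)
  | MS_contr u v : gE G u v -> minor_step G (contract_edge G u v).

Definition graph_iso (T1 T2 : finType) (H : sgraph T1) (G : sgraph T2) : Prop :=
  exists f : T1 -> T2,
    [/\ {in gV H &, injective f}, f @: gV H = gV G &
        {in gV H &, forall x y, gE H x y = gE G (f x) (f y)}].

Definition is_minor (T1 T2 : finType) (H : sgraph T1) (G : sgraph T2) : Prop :=
  exists G0 : sgraph T2, clos_refl_trans (sgraph T2) (@minor_step T2) G G0 /\ graph_iso H G0.

Definition token_graph (T : finType) (G : sgraph T) (k : nat) : sgraph {set T} :=
  SGraph [set A : {set T} | (A \subset gV G) && (#|A| == k)]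
    (fun A B => [&& A \subset gV G, #|A| == k, B \subset gV G, #|B| == k &
       [exists a, exists b, ((A :\: B) :|: (B :\: A) == [set a; b]) && gE G a b]]).

From mathcomp Require Import all_boot.
From Stdlib Require Import Relation_Operators.
Set Implicit Arguments. Unset Strict Implicit. Unset Printing Implicit Defensive.

(* Minors are closed under isomorphism and under composition, so it suffices
   to treat a single deletion or contraction in G.  Deleting a vertex or an
   edge of G makes F_k of the result a subgraph of F_k(G).  For the
   contraction of an edge uv into u, contract in F_k(G) every edge
   A -- (A - v + u) with v in A and u not in A: these edges form stars whose
   centres are not of that kind.  The result contains F_k(G/uv) as a subgraph,
   since a token move along a new edge u -- c of G/uv is the image of the move
   v -- c from the set in which the token on u sits on v instead. *)

#[local] Arguments rt_step {A R x y}.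
#[local] Arguments rt_refl {A R x}.
#[local] Arguments rt_trans {A R x y z}.

Local Notation minor_steps := (clos_refl_trans _ (@minor_step _)).
Local Notation symdiff A B := ((A :\: B) :|: (B :\: A)).
Local Notation token_adj E A B :=
  [exists a, exists b, (symdiff A B == [set a; b]) && E a b].

Lemma minor_step_simple (T : finType) (G G1 : sgraph T) :
  simple_graph G -> minor_step G G1 -> simple_graph G1.
Proof.
case=> sym irr inV; case=> [v _|u v _|u v _]; split => /=.
- by move=> x y; rewrite sym; case: (gE G y x); case: (x != v); case: (y != v).
- by move=> x /=; rewrite irr.
- by move=> x y /and3P [/inV /andP [xV yV] xv yv]; rewrite !inE xv yv xV.
- move=> x y; rewrite sym; congr andb; congr negb; rewrite orbC; congr orb; exact: andbC.
- by move=> x; rewrite /= irr.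
- by move=> x y /andP [/inV].
- move=> x y; rewrite eq_sym (sym y x) (sym v x) (sym y v); congr (_ && _).
  rewrite andbCA; congr (_ && (_ && _)); congr (_ || _); exact: orbC.
- by move=> x /=; rewrite eqxx.
- by move=> x y /and4P [_ -> -> _].
Qed.

Lemma minor_steps_simple (T : finType) (G G1 : sgraph T) :
  simple_graph G -> minor_steps G G1 -> simple_graph G1.
Proof.
move=> sG r; elim: r sG => [x y /minor_step_simple //|//|x y z _ IH1 _ IH2] sx.
exact: IH2 (IH1 sx).
Qed.

Lemma token_graph_sym (T : finType) (G : sgraph T) k :
  symmetric (gE G) -> symmetric (gE (token_graph G k)).
Proof.
move=> sym.
have adjC (A B : {set T}) : token_adj (gE G) A B -> token_adj (gE G) B A.
  case/existsP=> a /existsP [b /andP [/eqP e h]].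
  by apply/existsP; exists b; apply/existsP; exists a; rewrite setUC e setUC eqxx sym.
by move=> A B /=; apply/idP/idP => /and5P [? ? ? ? /adjC ?]; apply/and5P.
Qed.

Lemma token_graph_simple (T : finType) (G : sgraph T) k :
  simple_graph G -> simple_graph (token_graph G k).
Proof.
case=> sym _ _; split; first exact: token_graph_sym.
- move=> A /=; rewrite setDv setU0; apply/negbTE/negP.
  case/and5P=> _ _ _ _ /existsP [a /existsP [b /andP [/eqP e _]]].
  by have := set21 a b; rewrite -e inE.
- by move=> A B /and5P [h1 h2 h3 h4 _]; rewrite !inE h1 h2 h3 h4.
Qed.

Section ImsetIn.
Variables (aT rT : finType) (f : aT -> rT) (V : {set aT}).
Hypothesis injf : {in V &, injective f}.

Lemma mem_imset_in (A : {set aT}) x :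
  A \subset V -> x \in V -> (f x \in f @: A) = (x \in A).
Proof.
move=> AV xV; apply/imsetP/idP => [[y yA /injf -> //]|xA]; last by exists x.
exact: subsetP yA.
Qed.

Lemma imset_in_inj (A B : {set aT}) :
  A \subset V -> B \subset V -> f @: A = f @: B -> A = B.
Proof.
move=> AV BV eAB; apply/setP => x; case xV: (x \in V).
  by rewrite -(mem_imset_in AV xV) -(mem_imset_in BV xV) eAB.
by rewrite (contraFF (subsetP AV x)) // (contraFF (subsetP BV x)).
Qed.

Lemma imsetD_in (A B : {set aT}) :
  A \subset V -> B \subset V -> f @: (A :\: B) = f @: A :\: f @: B.
Proof.
move=> AV BV; apply/setP => y; apply/imsetP/setDP.
- case=> x /setDP [xA xB] ->; have xV := subsetP AV _ xA.
  by rewrite (mem_imset_in BV xV) imset_f.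
- case=> /imsetP [x xA ->]; have xV := subsetP AV _ xA.
  by rewrite (mem_imset_in BV xV) => xB; exists x; rewrite ?inE ?xA ?xB.
Qed.

Lemma imsetD1_in x : x \in V -> f @: (V :\ x) = f @: V :\ f x.
Proof. by move=> xV; rewrite imsetD_in ?subxx ?sub1set ?imset_set1. Qed.

Lemma imset_preimset_in (B : {set rT}) :
  B \subset f @: V -> f @: (V :&: f @^-1: B) = B.
Proof.
move=> BfV; apply/setP => y; apply/imsetP/idP => [[x /setIP [_] /[!inE] ? ->] //|yB].
have /imsetP [x xV yfx] := subsetP BfV _ yB.
by exists x; rewrite // !inE xV -yfx.
Qed.

End ImsetIn.

Lemma token_adj_imset (aT rT : finType) (f : aT -> rT) (V : {set aT})
    (E : rel aT) (E' : rel rT) (A B : {set aT}) :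
  {in V &, injective f} -> {in V &, forall x y, E x y = E' (f x) (f y)} ->
  A \subset V -> B \subset V -> token_adj E' (f @: A) (f @: B) = token_adj E A B.
Proof.
move=> injf fE AV BV.
have SV : symdiff A B \subset V.
  by rewrite subUset (subset_trans (subsetDl A B)) // (subset_trans (subsetDl B A)).
rewrite -(imsetD_in injf AV BV) -(imsetD_in injf BV AV) -imsetU.
apply/existsP/existsP => [[a' /existsP [b' /andP [/eqP e E'ab]]]|].
- have /imsetP [a aS ea] : a' \in f @: symdiff A B by rewrite e set21.
  have /imsetP [b bS eb] : b' \in f @: symdiff A B by rewrite e set22.
  rewrite {}ea {}eb in e E'ab.
  exists a; apply/existsP; exists b; rewrite fE ?(subsetP SV) // E'ab andbT.
  apply/eqP/(imset_in_inj injf SV); first by rewrite subUset !sub1set !(subsetP SV).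
  by rewrite e imsetU !imset_set1.
- case=> a /existsP [b /andP [/eqP e Eab]].
  have [aV bV] : a \in V /\ b \in V by rewrite !(subsetP SV) // e ?set21 ?set22.
  exists (f a); apply/existsP; exists (f b).
  by rewrite e imsetU !imset_set1 eqxx -fE.
Qed.

Lemma graph_iso_refl (T : finType) (G : sgraph T) : graph_iso G G.
Proof. by exists id; split => //; apply: imset_id. Qed.

Lemma graph_iso_trans (T1 T2 T3 : finType) (X : sgraph T1) (Y : sgraph T2) (Z : sgraph T3) :
  graph_iso X Y -> graph_iso Y Z -> graph_iso X Z.
Proof.
case=> f [injf fX fE] [g [injg gY gE]].
have fXY x : x \in gV X -> f x \in gV Y by rewrite -fX => /(imset_f f).
exists (g \o f); split => /=.
- by move=> x y xX yX /(injg _ _ (fXY x xX) (fXY y yX)) /injf; apply.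
- by rewrite imset_comp fX gY.
- by move=> x y xX yX; rewrite fE // gE ?fXY.
Qed.

Lemma token_graph_iso (T1 T2 : finType) (H : sgraph T1) (G : sgraph T2) k :
  graph_iso H G -> graph_iso (token_graph H k) (token_graph G k).
Proof.
case=> f [injf fV fE]; exists (fun A : {set T1} => f @: A).
have cardA (A : {set T1}) : A \subset gV H -> #|f @: A| = #|A|.
  move=> AV; apply: card_in_imset => x y /(subsetP AV) xV /(subsetP AV); exact: injf.
have subA (A : {set T1}) : A \subset gV H -> f @: A \subset gV G by rewrite -fV; apply: imsetS.
split.
- by move=> A B /[!inE] /andP [AV _] /andP [BV _]; apply: (imset_in_inj injf AV BV).
- apply/setP => B; rewrite inE; apply/imsetP/andP => [[A /[!inE] /andP [AV cA] ->]|[BV cB]].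
    by rewrite subA // cardA.
  have AV : gV H :&: f @^-1: B \subset gV H := subsetIl _ _.
  have fA : f @: (gV H :&: f @^-1: B) = B by apply: imset_preimset_in; rewrite ?fV.
  by exists (gV H :&: f @^-1: B); rewrite // inE AV -(cardA _ AV) fA.
- move=> A B /[!inE] /andP [AV cA] /andP [BV cB] /=.
  by rewrite AV BV cA cB !subA // !cardA // cA cB (token_adj_imset injf fE).
Qed.

Lemma transport_minor_step (T1 T2 : finType) (A A1 : sgraph T1) (B : sgraph T2) :
  simple_graph A -> graph_iso A B -> minor_step A A1 ->
  exists2 B1, minor_step B B1 & graph_iso A1 B1.
Proof.
case=> _ _ inV [f [injf fV fE]].
have eqf : {in gV A &, forall x y, (f x == f y) = (x == y)}.
  by move=> x y xV yV; apply/eqP/eqP => [/injf ->|->].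
have injfD v : {in gV A :\ v &, injective f}.
  by move=> x y /setD1P [_ xV] /setD1P [_ yV]; apply: injf.
case=> [v vV|u v /[dup] /inV /andP [uV vV] e|u v /[dup] /inV /andP [uV vV] e].
- exists (delete_vertex B (f v)); first by constructor; rewrite -fV imset_f.
  exists f; split => //=; first by rewrite imsetD1_in // fV.
  by move=> x y /setD1P [xv xV] /setD1P [yv yV]; rewrite fE // !eqf // xv yv.
- exists (delete_edge B (f u) (f v)); first by constructor; rewrite -fE.
  by exists f; split => //= x y xV yV; rewrite fE // !eqf.
- exists (contract_edge B (f u) (f v)); first by constructor; rewrite -fE.
  exists f; split => //=; first by rewrite imsetD1_in // fV.
  move=> x y /setD1P [xv xV] /setD1P [yv yV].
  rewrite !inE -fV !(mem_imset_in injf (subxx _)) // !eqf // xv yv xV yV.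
  by rewrite -!fE.
Qed.

Lemma transport_minor_steps (T1 T2 : finType) (A A0 : sgraph T1) (B : sgraph T2) :
  simple_graph A -> graph_iso A B -> minor_steps A A0 ->
  exists2 B0, minor_steps B B0 & graph_iso A0 B0.
Proof.
move=> sA iAB r; elim: r B sA iAB => {A A0} [A A1 st|A|A A1 A2 r1 IH1 _ IH2] B sA iAB.
- by case: (transport_minor_step sA iAB st) => B1 ? ?; exists B1 => //; apply: rt_step.
- by exists B => //; apply: rt_refl.
- case: (IH1 B sA iAB) => B1 rB1 iB1.
  case: (IH2 B1 (minor_steps_simple sA r1) iB1) => B2 rB2 iB2.
  by exists B2 => //; apply: rt_trans rB1 rB2.
Qed.

Lemma minor_trans (T1 T2 T3 : finType) (X : sgraph T1) (Y : sgraph T2) (Z : sgraph T3) :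
  simple_graph Y -> is_minor X Y -> is_minor Y Z -> is_minor X Z.
Proof.
move=> sY [Y0 [rY iX]] [Z0 [rZ iY]].
case: (transport_minor_steps sY iY rY) => Z1 rZ1 iZ1.
by exists Z1; split; [apply: rt_trans rZ rZ1 | apply: graph_iso_trans iX iZ1].
Qed.

Lemma minor_steps_minor (T1 T2 : finType) (H : sgraph T1) (G G1 : sgraph T2) :
  minor_steps G G1 -> is_minor H G1 -> is_minor H G.
Proof. by move=> r [G0 [r0 i]]; exists G0; split => //; apply: rt_trans r r0. Qed.

Definition subgraph (T : finType) (H G : sgraph T) : Prop :=
  gV H \subset gV G /\ subrel (gE H) (gE G).

Lemma delete_vertices (T : finType) (G : sgraph T) (W : {set T}) :
  exists2 G1, minor_steps G G1 &
    gV G1 = gV G :&: W /\ {in W &, forall x y, gE G1 x y = gE G x y}.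
Proof.
have [n] := ubnP #|gV G :\: W|; elim: n G => // n IH G.
have [/eqP|[w]] := set_0Vmem (gV G :\: W).
  rewrite setD_eq0 => /setIidPl GW _.
  by exists G; [apply: rt_refl | split].
move=> /setDP [wG wW] /(leq_trans (proper_card _)) lt_n.
have /lt_n /IH [G1 r1 [V1 E1]] : gV (delete_vertex G w) :\: W \proper gV G :\: W.
  apply/properP; split; first by apply: setSD; apply: subD1set.
  by exists w; rewrite !inE ?eqxx ?wG ?wW.
exists G1; first by apply: rt_trans (rt_step (MS_delv wG)) r1.
split.
  rewrite V1; apply/setP => x; rewrite !inE.
  by case: (x =P w) => [->|]; rewrite ?(negbTE wW) ?andbF.
move=> x y xW yW; rewrite E1 //=.
have neq_w z : z \in W -> z != w by move=> zW; apply: contraNneq wW => <-.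
by rewrite !neq_w ?andbT.
Qed.

Lemma delete_edges (T : finType) (G : sgraph T) (R : rel T) :
  symmetric R ->
  exists2 G1, minor_steps G G1 &
    gV G1 = gV G /\ forall x y, gE G1 x y = gE G x y && R x y.
Proof.
move=> symR; pose extra (G : sgraph T) := [set e | gE G e.1 e.2 && ~~ R e.1 e.2].
have [n] := ubnP #|extra G|; elim: n G => // n IH G.
have [/setP extra0|[[a b]]] := set_0Vmem (extra G).
  exists G; [exact: rt_refl | split => // x y].
  by have := extra0 (x, y); rewrite !inE /=; case: (gE G x y) (R x y) => [] [].
rewrite inE /= => /andP [eab nRab] /(leq_trans (proper_card _)) lt_n.
have /lt_n /IH [G1 r1 [V1 E1]] : extra (delete_edge G a b) \proper extra G.
  apply/properP; split.
    by apply/subsetP => -[x y]; rewrite !inE /= -andbA => /andP [-> /andP [_ ->]].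
  by exists (a, b); rewrite !inE /= ?eab ?nRab ?eqxx.
exists G1; first by apply: rt_trans (rt_step (MS_dele eab)) r1.
split => // x y; rewrite E1 /= -andbA; congr (_ && _).
case Rxy: (R x y); rewrite ?andbF // andbT.
by apply: contraTN Rxy => /orP [] /andP [/eqP -> /eqP ->] //; rewrite symR.
Qed.

Lemma subgraph_minor (T : finType) (H G : sgraph T) :
  symmetric (gE H) -> subgraph H G -> is_minor H G.
Proof.
move=> symH [VHG EHG].
have [G1 r1 [V1 E1]] := delete_vertices G (gV H).
have [G2 r2 [V2 E2]] := delete_edges G1 symH.
exists G2; split; first exact: rt_trans r1 r2.
exists id; split => //; first by rewrite imset_id V2 V1; apply/esym/setIidPr.
move=> x y xH yH /=; rewrite E2 E1 //.
by case Hxy: (gE H x y); rewrite ?andbF ?andbT // EHG.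
Qed.

Section ContractStars.
Variables (T : finType) (p : T -> T).

Definition contract_map (M : {set T}) (x : T) : T := if x \in M then p x else x.

Lemma contract_mapD1 (M : {set T}) w x : w \in M ->
  contract_map M x = if x == w then p w else contract_map (M :\ w) x.
Proof. by move=> wM; rewrite /contract_map !inE; case: eqVneq => [->|xw]; rewrite ?wM. Qed.

Lemma contract_map_mem (V M : {set T}) x :
  {in M, forall m, p m \in V :\: M} -> x \in V -> contract_map M x \in V :\: M.
Proof. by rewrite /contract_map => pM xV; case: ifPn => [/pM|xM] //; rewrite inE xM. Qed.

(* Each centre p m lies outside M, so the edges can be contracted one at a time. *)
Lemma contract_stars (G : sgraph T) (M : {set T}) :
  {in M, forall m, [/\ m \in gV G, p m \in gV G :\: M & gE G (p m) m]} ->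
  exists2 G1, minor_steps G G1 &
    gV G1 = gV G :\: M /\
    forall x y, x \in gV G -> y \in gV G -> gE G x y ->
      contract_map M x != contract_map M y ->
      gE G1 (contract_map M x) (contract_map M y).
Proof.
have [n] := ubnP #|M|; elim: n M => // n IH M.
have [-> _ _|[w wM] /(leq_trans (proper_card (properD1 wM))) lt_n hM] := set_0Vmem M.
  exists G; [exact: rt_refl | split; first by rewrite setD0].
  by rewrite /contract_map => x y _ _ + _; rewrite !inE.
have pM : {in M, forall m, p m \in gV G :\: M} by move=> m /hM [].
have hMw : {in M :\ w, forall m, [/\ m \in gV G, p m \in gV G :\: (M :\ w) & gE G (p m) m]}.
  move=> m /setD1P [_ /hM [mG /setDP [pmG pmM] e]].
  by split => //; rewrite !inE pmG negb_and pmM orbT.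
have [G1 r1 [V1 E1]] := IH _ lt_n hMw.
have [wG /setDP [pwG pwM] epw] := hM w wM.
have c0w : contract_map (M :\ w) w = w by rewrite /contract_map !inE eqxx.
have c0pw : contract_map (M :\ w) (p w) = p w.
  by rewrite /contract_map inE (negbTE pwM) andbF.
have e1 : gE G1 (p w) w.
  by have := E1 _ _ pwG wG epw; rewrite c0pw c0w; apply; apply: contraNneq pwM => ->.
exists (contract_edge G1 (p w) w); first by apply: rt_trans r1 (rt_step (MS_contr e1)).
have V2 : gV G1 :\ w = gV G :\: M by rewrite V1 setDDl setUC setD1K.
split=> // x y xG yG exy.
have cM z : z \in gV G -> contract_map M z \in gV G :\: M by apply: contract_map_mem pM.
have neq_w z : z \in gV G -> contract_map M z != w.
  by move=> /cM; apply: contraTneq => ->; rewrite inE wM.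
move=> cxy; rewrite /= V2 cxy !cM //=.
move: cxy (neq_w _ xG) (neq_w _ yG); rewrite !(contract_mapD1 _ wM).
case: (eqVneq x w) => [exw|xw]; case: (eqVneq y w) => [eyw|yw] //=.
- by rewrite eqxx.
- move=> cxy _ cyw; subst x; rewrite eqxx.
  by have := E1 _ _ wG yG exy; rewrite c0w => ->; rewrite ?orbT // eq_sym.
- move=> cxy cxw _; subst y; rewrite eqxx.
  by have := E1 _ _ xG wG exy; rewrite c0w => ->; rewrite ?orbT.
- by move=> cxy _ _; rewrite E1.
Qed.

End ContractStars.

Section TokenContraction.
Variables (T : finType) (G : sgraph T) (k : nat) (u v : T).
Hypotheses (simpleG : simple_graph G) (euv : gE G u v).

Let F := token_graph G k.
Let C := token_graph (contract_edge G u v) k.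
Let slide (A : {set T}) := u |: (A :\ v).
Let Mv := [set A in gV F | (v \in A) && (u \notin A)].

Let uV : u \in gV G. Proof. by case: simpleG => _ _ /(_ _ _ euv) /andP []. Qed.
Let vV : v \in gV G. Proof. by case: simpleG => _ _ /(_ _ _ euv) /andP []. Qed.
Let u_neq_v : u != v. Proof. by case: simpleG => _ irr _; apply: contraTneq euv => ->; rewrite irr. Qed.

Lemma slide_star :
  {in Mv, forall A, [/\ A \in gV F, slide A \in gV F :\: Mv & gE F (slide A) A]}.
Proof.
move=> A /[!inE] /andP [/andP [AV cA] /andP [vA uA]].
have uAv : u \notin A :\ v by rewrite inE negb_and uA orbT.
have sV : slide A \subset gV G.
  by rewrite subUset sub1set uV (subset_trans (subD1set A v)).
have sc : #|slide A| == k.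
  by rewrite /slide cardsU1 uAv add1n -(eqP cA) (cardsD1 v A) vA.
split; [by rewrite AV | by rewrite sV sc !eqxx /= ?andbF |].
rewrite /F /= sV sc AV cA; apply/existsP; exists u; apply/existsP; exists v.
rewrite euv andbT; apply/eqP/setP => x; rewrite !inE.
case: (eqVneq x u) => [->|xu]; first by rewrite (negbTE uA).
case: (eqVneq x v) => [->|xv]; first by rewrite vA.
by case: (x \in A).
Qed.

Lemma token_contract_vertex B :
  B \in gV C -> [/\ B \in gV F, v \notin B & contract_map slide Mv B = B].
Proof.
rewrite !inE subsetD1 => /andP [/andP [BV vB] cB].
by rewrite BV cB /contract_map !inE (negbTE vB) andbF.
Qed.

Lemma unslide B :
  B \in gV F -> u \in B -> v \notin B -> v |: (B :\ u) \in Mv /\ slide (v |: (B :\ u)) = B.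
Proof.
rewrite inE => /andP [BV cB] uB vB; split.
  have vBu : v \notin B :\ u by rewrite inE negb_and vB orbT.
  rewrite !inE subUset sub1set vV (subset_trans (subD1set B u)) //=.
  rewrite cardsU1 vBu add1n -(eqP cB) (cardsD1 u B) uB eqxx /=.
  by rewrite add1n !eqxx (negbTE u_neq_v).
apply/setP => x; rewrite !inE.
case: (eqVneq x u) => [->|xu]; first by rewrite uB.
by case: (eqVneq x v) => [->|xv]; rewrite ?(negbTE vB).
Qed.

Lemma unslide_adj B B' c :
  B \in gV F -> B' \in gV F -> v \notin B -> v \notin B' -> u \in B ->
  c != u -> gE G v c -> symdiff B B' = [set u; c] -> gE F (v |: (B :\ u)) B'.
Proof.
move=> BF B'F vB vB' uB cu evc dBB'.
have [/setIdP [/[!inE] /andP [AV cA] _] _] := unslide BF uB vB.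
move: B'F; rewrite inE => /andP [B'V cB']; rewrite /= AV cA B'V cB' /=.
apply/existsP; exists v; apply/existsP; exists c; rewrite evc andbT.
have uB' : u \notin B'.
  by apply: contraTN (set21 u c) => uB'; rewrite -dBB' !inE uB uB'.
apply/eqP/setP => x; move/setP/(_ x): dBB'; rewrite !inE => dx.
case: (eqVneq x v) => [->|xv]; first by rewrite (negbTE vB').
case: (eqVneq x u) => [->|xu]; first by rewrite (negbTE uB') eq_sym (negbTE cu).
by move: dx; rewrite (negbTE xu) /= => <-.
Qed.

Let simpleC : simple_graph C.
Proof. exact/token_graph_simple/(minor_step_simple simpleG)/MS_contr. Qed.

Lemma token_contract_lift B B' : gE C B B' ->
  exists A A', [/\ gE F A A', contract_map slide Mv A = B & contract_map slide Mv A' = B'].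
Proof.
move=> eBB'; have [_ _ /(_ _ _ eBB') /andP [BC B'C]] := simpleC.
have [BF vB cB] := token_contract_vertex BC.
have [B'F vB' cB'] := token_contract_vertex B'C.
move: eBB' => /and5P [_ _ _ _ /existsP [a /existsP [b /andP [/eqP dBB' eab]]]].
have lift_u c : symdiff B B' = [set u; c] -> c != u -> gE G v c ->
    exists A A', [/\ gE F A A', contract_map slide Mv A = B & contract_map slide Mv A' = B'].
  move=> dc cu evc; case uB: (u \in B).
    have [AM sA] := unslide BF uB vB.
    exists (v |: (B :\ u)), B'; split=> //; last by rewrite /contract_map AM.
    exact: unslide_adj dc.
  have uB' : u \in B'.
    by move/setP/(_ u): dc; rewrite !inE uB eqxx andbF.
  have [AM sA] := unslide B'F uB' vB'.
  exists B, (v |: (B' :\ u)); split=> //; last by rewrite /contract_map AM.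
  rewrite token_graph_sym; last by case: simpleG.
  by apply: (unslide_adj (c := c)) => //; rewrite setUC.
case/and4P: eab => ab _ _ /or3P [eab|/andP [/eqP au evb]|/andP [/eqP bu eav]].
- exists B, B'; split=> //; move: BF B'F; rewrite /F !inE /= => /andP [-> ->] /andP [-> ->].
  by apply/existsP; exists a; apply/existsP; exists b; rewrite dBB' eqxx.
- by subst a; apply: lift_u evb; rewrite // eq_sym.
- subst b; apply: (lift_u a) => //; first by rewrite dBB' setUC.
  by case: simpleG => ->.
Qed.

Lemma token_graph_contract : is_minor C F.
Proof.
have [G1 r1 [V1 E1]] := contract_stars slide_star.
apply: minor_steps_minor r1 _; apply: subgraph_minor; first by case: simpleC.
split.
  apply/subsetP => B /token_contract_vertex [BF vB _].
  by move: BF; rewrite V1 !inE (negbTE vB) /= andbF.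
move=> B B' eBB'; have [A [A' [eAA' cA cA']]] := token_contract_lift eBB'.
subst B B'.
have [_ _ /(_ _ _ eAA') /andP [AF A'F]] := token_graph_simple k simpleG.
apply: E1 => //; apply: contraTneq eBB' => ->.
by case: simpleC => _ ->.
Qed.

End TokenContraction.

Lemma token_graph_subgraph (T : finType) (H G : sgraph T) k :
  subgraph H G -> subgraph (token_graph H k) (token_graph G k).
Proof.
case=> VHG EHG; split.
  by apply/subsetP => A /[!inE] /andP [AH ->]; rewrite (subset_trans AH).
move=> A B /and5P [AH cA BH cB /existsP [a /existsP [b /andP [dAB eab]]]].
rewrite /= cA cB !(subset_trans _ VHG) //=.
by apply/existsP; exists a; apply/existsP; exists b; rewrite dAB EHG.
Qed.

Lemma token_minor_step (T : finType) (G G1 : sgraph T) k :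
  simple_graph G -> minor_step G G1 -> is_minor (token_graph G1 k) (token_graph G k).
Proof.
move=> sG st; have [symG1 _ _] := minor_step_simple sG st.
case: st symG1 => [v _|u v _|u v euv] symG1; last exact: token_graph_contract.
all: apply/subgraph_minor/token_graph_subgraph; first exact: token_graph_sym.
- by split=> [|x y /and3P []]; first exact: subD1set.
- by split=> // x y /andP [].
Qed.

Lemma token_minor_steps (T : finType) (G G1 : sgraph T) k :
  simple_graph G -> minor_steps G G1 -> is_minor (token_graph G1 k) (token_graph G k).
Proof.
move=> sG r; elim: r sG => {G G1} [G G1 st|G|G G1 G2 r1 IH1 _ IH2] sG.
- exact: token_minor_step.
- by exists (token_graph G k); split; [apply: rt_refl | apply: graph_iso_refl].
- have sG1 := minor_steps_simple sG r1.
  exact: minor_trans (token_graph_simple k sG1) (IH2 sG1) (IH1 sG).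
Qed.

Lemma graph_iso_minor (T1 T2 T3 : finType) (X : sgraph T1) (Y : sgraph T2) (Z : sgraph T3) :
  graph_iso X Y -> is_minor Y Z -> is_minor X Z.
Proof. by move=> iXY [Z0 [r iYZ]]; exists Z0; split=> //; apply: graph_iso_trans iXY iYZ. Qed.

Theorem lemma5 (T T' : finType) (G : sgraph T) (G' : sgraph T') (k : nat) :
  simple_graph G -> simple_graph G' -> is_minor G' G ->
  1 <= k -> k < #|gV G'| ->
  is_minor (token_graph G' k) (token_graph G k).
Proof.
move=> sG _ [G0 [r iG']] _ _.
exact: graph_iso_minor (token_graph_iso k iG') (token_minor_steps k sG r).
Qed.
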